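(* In the setting below, for any $\varepsilon>0$ and $\theta\in\mathbb{R}$, PrivTree$(D,\lambda,\theta,\delta)$ satisfies $\varepsilon$-differential privacy if $\lambda\ge\frac{2\beta-1}{\beta-1}\cdot\frac{1}{\varepsilon}$ and $\delta=\lambda\ln\beta$, where $\beta\ge 2$ is the fanout of the splitting scheme.
   Context: $\mathrm{Lap}(\lambda)$ is the Laplace distribution with density $\frac{1}{2\lambda}e^{-|y|/\lambda}$. Setting: $\Omega$ is a domain and there is a fixed, data-independent hierarchical splitting scheme of fanout $\beta\ge 2$: an infinite rooted tree of candidate nodes in which every node $v$ has exactly $\beta$ children, each node $v$ carries a sub-domain $\mathrm{dom}(v)\subseteq\Omega$, the root $v_1$ has $\mathrm{dom}(v_1)=\Omega$, and the sub-domains of the $\beta$ children of $v$ partition $\mathrm{dom}(v)$. $\mathrm{depth}(v)$ is the hop distance from $v$ to the root. A dataset $D$ is a finite multiset of points of $\Omega$; $c(v)$ is the number of points of $D$ lying in $\mathrm{dom}(v)$. PrivTree$(D,\lambda,\theta,\delta)$: start with the tree consisting only of the root, marked unvisited. While some node $v$ is unvisited: mark $v$ visited; set $b(v)=\max\{\theta-\delta,\ c(v)-\mathrm{depth}(v)\cdot\delta\}$; set $\hat b(v)=b(v)+\eta_v$ with $\eta_v\sim\mathrm{Lap}(\lambda)$ fresh and independent; if $\hat b(v)>\theta$, add all $\beta$ children of $v$ as unvisited nodes. The output is the resulting tree (nodes with sub-domains), with all counts removed. Two datasets are neighboring if one is obtained from the other by inserting one point. An algorithm $\mathcal{A}$ is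 $\varepsilon$-differentially private if for all neighboring $D,D'$ and every possible output $O$, $\ln\big(\Pr[\mathcal{A}(D)=O]/\Pr[\mathcal{A}(D')=O]\big)\le\varepsilon$. *)

From Stdlib Require Import Reals Lra List Permutation.
Import ListNotations.
Open Scope R_scope.

(** Candidate nodes of the infinite beta-ary splitting tree are paths from the
    root: a node is a list of child indices (each < beta); the root is [],
    the j-th child of v is v ++ [j], and depth v = length v. *)
Definition node := list nat.

Definition child (v : node) (j : nat) : node := v ++ [j].

Definition depth (v : node) : nat := length v.

Definition splitting_scheme (Omega : Type) (beta : nat) (dom : node -> Omega -> bool) : Prop :=
  (forall x, dom [] x = true) /\
  (forall v j x, (j < beta)%nat -> dom (child v j) x = true -> dom v x = true) /\
  (forall v x, dom v x = true ->
     exists j, (j < beta)%nat /\ dom (child v j) x = true /\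
       forall k, (k < beta)%nat -> dom (child v k) x = true -> k = j).

(** A dataset is a finite multiset of points, represented by a list. *)
Definition count_in {Omega : Type} (dom : node -> Omega -> bool) (D : list Omega) (v : node) : nat :=
  length (filter (dom v) D).

Definition insert_one {Omega : Type} (D D' : list Omega) : Prop :=
  exists x, Permutation D' (x :: D).

Definition neighboring {Omega : Type} (D D' : list Omega) : Prop :=
  insert_one D D' \/ insert_one D' D.

(** Pr[ b + eta > theta ] for eta ~ Lap(lambda) (density e^{-|y|/lambda}/(2 lambda)):
    the Laplace survival function evaluated at theta - b. *)
Definition lap_survival (lam t : R) : R :=
  if Rle_dec 0 t then / 2 * exp (- t / lam) else 1 - / 2 * exp (t / lam).

Definition split_prob (lam theta b : R) : R := lap_survival lam (theta - b).

Definition biased_count {Omega : Type} (dom : node -> Omega -> bool) (D : list Omega)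
  (theta delta : R) (v : node) : R :=
  Rmax (theta - delta) (INR (count_in dom D v) - INR (depth v) * delta).

(** A possible output of PrivTree: a finite tree, described by the (finite,
    duplicate-free) list I of its internal (= split) nodes. *)
Definition valid_output (beta : nat) (I : list node) : Prop :=
  NoDup I /\
  forall v, In v I -> v = [] \/ exists u j, In u I /\ (j < beta)%nat /\ v = child u j.

Definition in_nodes (v : node) (I : list node) : bool :=
  if in_dec (list_eq_dec Nat.eq_dec) v I then true else false.

Definition leaves (beta : nat) (I : list node) : list node :=
  match I with
  | [] => [ [] ]
  | _ => filter (fun w => negb (in_nodes w I))
            (flat_map (fun v => map (child v) (seq 0 beta)) I)
  end.

Definition prodR (l : list R) : R := fold_right Rmult 1 l.

(** Pr[ PrivTree(D, lambda, theta, delta) = O ] for the output O with internal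
    nodes I: the algorithm outputs O iff exactly the nodes of O are visited,
    every internal node of O has its noisy count exceed theta and every leaf
    of O does not; the noises are independent, so this is the product. *)
Definition privtree_prob {Omega : Type} (beta : nat) (dom : node -> Omega -> bool)
  (D : list Omega) (lam theta delta : R) (I : list node) : R :=
  prodR (map (fun v => split_prob lam theta (biased_count dom D theta delta v)) I) *
  prodR (map (fun v => 1 - split_prob lam theta (biased_count dom D theta delta v))
             (leaves beta I)).

Definition privtree_DP {Omega : Type} (beta : nat) (dom : node -> Omega -> bool)
  (lam theta delta eps : R) : Prop :=
  forall (D D' : list Omega), neighboring D D' ->
  forall I, valid_output beta I ->
    ln (privtree_prob beta dom D lam theta delta I /
        privtree_prob beta dom D' lam theta delta I) <= eps.

(* If D' = D + {x}, only the nodes whose sub-domain contains x change their biased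
   count, by at most 1, and these nodes form a single root-to-leaf path. The
   log-ratio of the split probabilities of one such node is at most 1/lambda, so a
   removed point costs at most 1/lambda through the unique leaf containing it. For
   an inserted point the internal nodes on the path matter: their unbiased counts
   c(v) - depth(v) delta decrease by at least delta per level, and since
   e^{-delta/lambda} = 1/beta the log-ratios of the nodes above theta decay
   geometrically, while the nodes below theta are saturated at theta - delta
   except for the lowest one. This gives (1 + beta/(beta-1))/lambda when the
   count increment h is at most min(delta, lambda/2); the increment 1 is a sum of
   such small increments, and the bound is additive in h. *)
From Stdlib Require Import Reals Lra Lia List Permutation.
Import ListNotations.
Open Scope R_scope.

Lemma exp_le_compat x y : x <= y -> exp x <= exp y.
Proof.
  intros H; destruct (Rle_lt_or_eq_dec _ _ H) as [Hlt| ->]; [left; now apply exp_increasing|lra].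
Qed.

Lemma ln_le_compat x y : 0 < x -> x <= y -> ln x <= ln y.
Proof.
  intros Hx H; destruct (Rle_lt_or_eq_dec _ _ H) as [Hlt| ->]; [left; now apply ln_increasing|lra].
Qed.


Lemma ln_le_sub_1 x : 0 < x -> ln x <= x - 1.
Proof. intros H; pose proof (exp_ineq1_le (ln x)) as E; rewrite exp_ln in E; lra. Qed.

Lemma ln_div_eq x y : 0 < x -> 0 < y -> ln (x / y) = ln x - ln y.
Proof. intros Hx Hy; unfold Rdiv; rewrite ln_mult, ln_Rinv; try apply Rinv_0_lt_compat; lra. Qed.

Lemma ln_div_le x y c : 0 < x -> 0 < y -> x <= y * exp c -> ln (x / y) <= c.
Proof.
  intros Hx Hy H; rewrite <- (ln_exp c); apply ln_le_compat; [now apply Rdiv_lt_0_compat|].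
  apply Rmult_le_reg_r with y; [lra|]; unfold Rdiv; rewrite Rmult_assoc, Rinv_l; lra.
Qed.

Lemma ln_div_nonpos x y : 0 < x -> x <= y -> ln (x / y) <= 0.
Proof. intros Hx H; apply ln_div_le; [lra|lra|]; rewrite exp_0; lra. Qed.

Lemma exp_half_lt_2 : exp (/ 2) < 2.
Proof.
  apply Rlt_le_trans with (exp (ln 2)); [apply exp_increasing, ln_lt_2|rewrite exp_ln; lra].
Qed.

Lemma Rdiv_le_compat_r c : 0 < c -> forall s t, s <= t -> s / c <= t / c.
Proof. intros Hc s t H; apply Rmult_le_compat_r; [left; now apply Rinv_0_lt_compat|lra]. Qed.

Lemma Rdiv_nonneg c x : 0 < c -> 0 <= x -> 0 <= x / c.
Proof. intros Hc Hx; rewrite <- (Rdiv_0_l c); now apply Rdiv_le_compat_r. Qed.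

Lemma exp_div_le_1 c x : 0 < c -> x <= 0 -> exp (x / c) <= 1.
Proof.
  intros Hc Hx; rewrite <- exp_0, <- (Rdiv_0_l c); now apply exp_le_compat, Rdiv_le_compat_r.
Qed.

Section LaplaceSurvival.

Variable lam : R.
Hypothesis lam_gt0 : 0 < lam.

Lemma lap_survival_nonneg t : 0 <= t -> lap_survival lam t = / 2 * exp (- t / lam).
Proof. intros H; unfold lap_survival; destruct (Rle_dec 0 t); [reflexivity|lra]. Qed.

Lemma lap_survival_nonpos t : t <= 0 -> lap_survival lam t = 1 - / 2 * exp (t / lam).
Proof.
  intros H; unfold lap_survival; destruct (Rle_dec 0 t); [|reflexivity].
  replace t with 0 by lra; rewrite Ropp_0, !Rdiv_0_l, exp_0; lra.
Qed.

Lemma lap_survival_bounds t : 0 < lap_survival lam t < 1.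
Proof.
  destruct (Rle_dec 0 t).
  - rewrite lap_survival_nonneg by lra.
    pose proof (exp_pos (- t / lam)).
    pose proof (exp_div_le_1 lam (- t) lam_gt0 ltac:(lra)).
    lra.
  - rewrite lap_survival_nonpos by lra.
    pose proof (exp_pos (t / lam)).
    pose proof (exp_div_le_1 lam t lam_gt0 ltac:(lra)).
    lra.
Qed.

Lemma one_sub_lap_survival t : 1 - lap_survival lam t = lap_survival lam (- t).
Proof.
  destruct (Rle_dec 0 t).
  - rewrite lap_survival_nonneg, lap_survival_nonpos by lra; lra.
  - rewrite lap_survival_nonpos, lap_survival_nonneg by lra; rewrite Ropp_involutive; lra.
Qed.

Lemma lap_survival_antimono s t : s <= t -> lap_survival lam t <= lap_survival lam s.
Proof.
  intros H; pose proof (lap_survival_bounds s); pose proof (lap_survival_bounds t).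
  destruct (Rle_dec 0 s) as [Hs|Hs]; [|destruct (Rle_dec t 0) as [Ht|Ht]].
  - rewrite !lap_survival_nonneg by lra.
    apply Rmult_le_compat_l; [lra|]; apply exp_le_compat, Rdiv_le_compat_r; lra.
  - rewrite !lap_survival_nonpos by lra.
    enough (exp (s / lam) <= exp (t / lam)) by lra; apply exp_le_compat, Rdiv_le_compat_r; lra.
  - rewrite lap_survival_nonneg, lap_survival_nonpos in * by lra.
    pose proof (exp_div_le_1 lam (- t) lam_gt0 ltac:(lra)).
    pose proof (exp_div_le_1 lam s lam_gt0 ltac:(lra)).
    lra.
Qed.

Lemma lap_survival_le_shift s t :
  s <= t -> lap_survival lam s <= lap_survival lam t * exp ((t - s) / lam).
Proof.
  intros H.
  set (A := exp (s / lam)); set (B := exp (t / lam)).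
  assert (HA : 0 < A) by apply exp_pos; assert (HB : 0 < B) by apply exp_pos.
  assert (AB : A <= B) by (apply exp_le_compat, Rdiv_le_compat_r; lra).
  assert (Eshift : exp ((t - s) / lam) = B * / A).
  { unfold A, B; rewrite <- exp_Ropp, <- exp_plus; f_equal; unfold Rdiv; ring. }
  assert (Eneg : forall u, exp (- u / lam) = / exp (u / lam)).
  { intros u; rewrite <- exp_Ropp; f_equal; unfold Rdiv; ring. }
  rewrite Eshift.
  destruct (Rle_dec 0 s) as [Hs|Hs]; [|destruct (Rle_dec t 0) as [Ht|Ht]].
  - rewrite !lap_survival_nonneg, !Eneg by lra; fold A B; right; field; lra.
  - rewrite !lap_survival_nonpos by lra; fold A B.
    assert (B <= 1) by (apply exp_div_le_1; lra).
    apply Rmult_le_reg_r with A; [lra|].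
    replace ((1 - / 2 * B) * (B * / A) * A) with ((1 - / 2 * B) * B) by (field; lra).
    assert (0 <= (B - A) * (2 - A - B)) by (apply Rmult_le_pos; lra).
    nra.
  - rewrite (lap_survival_nonneg t), (lap_survival_nonpos s), Eneg by lra; fold A B.
    apply Rmult_le_reg_r with A; [lra|].
    replace (/ 2 * / B * (B * / A) * A) with (/ 2) by (field; lra).
    pose proof (Rle_0_sqr (A - 1)); unfold Rsqr in *; nra.
Qed.

End LaplaceSurvival.

Definition log_split (lam theta delta a : R) : R :=
  ln (split_prob lam theta (Rmax (theta - delta) a)).

Section LogSplitIncrement.

Variables lam theta delta : R.
Hypothesis lam_gt0 : 0 < lam.

Let psi := log_split lam theta delta.

Lemma log_split_incr_le a h : 0 <= h -> psi (a + h) - psi a <= h / lam.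
Proof.
  intros Hh; unfold psi, log_split, split_prob.
  set (s := theta - Rmax (theta - delta) (a + h)); set (t := theta - Rmax (theta - delta) a).
  assert (Hst : s <= t /\ t - s <= h).
  { unfold s, t, Rmax; destruct (Rle_dec (theta - delta) (a + h)), (Rle_dec (theta - delta) a); lra. }
  pose proof (lap_survival_bounds lam lam_gt0 s); pose proof (lap_survival_bounds lam lam_gt0 t).
  enough (ln (lap_survival lam s) <= ln (lap_survival lam t * exp (h / lam))) as E
    by (rewrite ln_mult, ln_exp in E by (try apply exp_pos; lra); lra).
  apply ln_le_compat; [lra|].
  eapply Rle_trans; [apply lap_survival_le_shift; [exact lam_gt0|apply Hst]|].
  apply Rmult_le_compat_l; [lra|]; apply exp_le_compat, Rdiv_le_compat_r; lra.
Qed.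

(* Below theta - delta the biased count is saturated, so only the excess over
   theta - delta of the incremented value matters. *)
Lemma log_split_incr_le_excess a h : 0 <= h -> 0 <= delta ->
  psi (a + h) - psi a <= Rmax 0 (a + h - theta + delta) / lam.
Proof.
  intros Hh Hd; unfold psi, log_split, split_prob.
  set (s := theta - Rmax (theta - delta) (a + h)).
  assert (Hs : s <= delta) by (unfold s; pose proof (Rmax_l (theta - delta) (a + h)); lra).
  assert (Hds : delta - s = Rmax 0 (a + h - theta + delta)).
  { unfold s, Rmax; destruct (Rle_dec (theta - delta) (a + h)), (Rle_dec 0 (a + h - theta + delta)); lra. }
  pose proof (lap_survival_bounds lam lam_gt0 s); pose proof (lap_survival_bounds lam lam_gt0 delta).
  assert (Hsd : ln (lap_survival lam s) <= ln (lap_survival lam delta) + (delta - s) / lam).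
  { rewrite <- (ln_exp ((delta - s) / lam)), <- ln_mult by (try apply exp_pos; lra).
    apply ln_le_compat; [lra|]; now apply lap_survival_le_shift. }
  assert (ln (lap_survival lam delta) <= ln (lap_survival lam (theta - Rmax (theta - delta) a))).
  { apply ln_le_compat; [lra|]; apply lap_survival_antimono; [exact lam_gt0|].
    pose proof (Rmax_l (theta - delta) a); lra. }
  rewrite Hds in Hsd; lra.
Qed.

(* Above theta the split probability is 1 - e^{(theta - a)/lambda}/2, whose
   logarithmic derivative is at most e^{(theta - a)/lambda}/lambda. *)
Lemma log_split_incr_le_tail a h : 0 <= h -> 0 <= delta -> theta <= a ->
  psi (a + h) - psi a <= h / lam * exp ((theta - a) / lam).
Proof.
  intros Hh Hd Ha; unfold psi, log_split, split_prob.
  rewrite (Rmax_right (theta - delta) a), (Rmax_right (theta - delta) (a + h)) by lra.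
  rewrite !lap_survival_nonpos by lra.
  set (E := exp ((theta - a) / lam)); set (q := exp (- h / lam)).
  assert (Eq : exp ((theta - (a + h)) / lam) = E * q).
  { unfold E, q; rewrite <- exp_plus; f_equal; unfold Rdiv; ring. }
  rewrite Eq.
  assert (HE : 0 < E <= 1).
  { split; [apply exp_pos|apply exp_div_le_1; lra]. }
  assert (Hq : 0 < q <= 1) by (split; [apply exp_pos|apply exp_div_le_1; lra]).
  assert (Hq1 : 1 - q <= h / lam).
  { pose proof (exp_ineq1_le (- h / lam)) as Hexp; fold q in Hexp.
    replace (- h / lam) with (- (h / lam)) in Hexp by (unfold Rdiv; ring); lra. }
  rewrite <- ln_div_eq by nra.
  eapply Rle_trans; [apply ln_le_sub_1; apply Rdiv_lt_0_compat; nra|].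
  replace ((1 - / 2 * (E * q)) / (1 - / 2 * E) - 1) with (E * (1 - q) / (2 - E)) by (field; lra).
  apply Rle_trans with (E * (1 - q)); [|nra].
  apply Rmult_le_reg_r with (2 - E); [lra|].
  replace (E * (1 - q) / (2 - E) * (2 - E)) with (E * (1 - q)) by (field; lra).
  assert (0 <= E * (1 - q)) by nra; nra.
Qed.

End LogSplitIncrement.

Fixpoint sumR {A} (f : A -> R) (l : list A) : R :=
  match l with [] => 0 | a :: l' => f a + sumR f l' end.

Lemma sumR_app {A} (f : A -> R) l1 l2 : sumR f (l1 ++ l2) = sumR f l1 + sumR f l2.
Proof. induction l1 as [|a l1 IH]; simpl; [ring|rewrite IH; ring]. Qed.

Lemma sumR_map {A B} (f : B -> R) (g : A -> B) l : sumR f (map g l) = sumR (fun a => f (g a)) l.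
Proof. induction l as [|a l IH]; simpl; [ring|rewrite IH; ring]. Qed.

Lemma sumR_plus {A} (f g : A -> R) l : sumR (fun a => f a + g a) l = sumR f l + sumR g l.
Proof. induction l as [|a l IH]; simpl; [ring|rewrite IH; ring]. Qed.

Lemma sumR_scale {A} c (f : A -> R) l : sumR (fun a => c * f a) l = c * sumR f l.
Proof. induction l as [|a l IH]; simpl; [ring|rewrite IH; ring]. Qed.

Lemma sumR_zero {A} (l : list A) : sumR (fun _ => 0) l = 0.
Proof. induction l as [|a l IH]; simpl; [reflexivity|rewrite IH; ring]. Qed.

Lemma sumR_le {A} (f g : A -> R) l : (forall a, In a l -> f a <= g a) -> sumR f l <= sumR g l.
Proof.
  induction l as [|a l IH]; simpl; intros H; [lra|].
  pose proof (H a (or_introl eq_refl)); enough (sumR f l <= sumR g l) by lra.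
  apply IH; intros; apply H; auto.
Qed.

Lemma sumR_ext {A} (f g : A -> R) l : (forall a, In a l -> f a = g a) -> sumR f l = sumR g l.
Proof. intros H; apply Rle_antisym; apply sumR_le; intros a Ha; rewrite H by exact Ha; lra. Qed.

Lemma sumR_nonpos {A} (f : A -> R) l : (forall a, In a l -> f a <= 0) -> sumR f l <= 0.
Proof.
  induction l as [|a l IH]; simpl; intros H; [lra|].
  pose proof (H a (or_introl eq_refl)); enough (sumR f l <= 0) by lra.
  apply IH; intros; apply H; auto.
Qed.

Lemma sumR_filter_split {A} (p : A -> bool) f l :
  sumR f l = sumR f (filter p l) + sumR f (filter (fun a => negb (p a)) l).
Proof. induction l as [|a l IH]; simpl; [ring|destruct (p a); simpl; rewrite IH; ring]. Qed.

Lemma sumR_filter {A} (p : A -> bool) f l :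
  (forall a, In a l -> p a = false -> f a = 0) -> sumR f l = sumR f (filter p l).
Proof.
  intros H; rewrite (sumR_filter_split p) at 1.
  enough (sumR f (filter (fun a => negb (p a)) l) = 0) by lra.
  rewrite (sumR_ext _ (fun _ => 0)).
  - apply sumR_zero.
  - intros a Ha; apply filter_In in Ha as [Ha Hp]; apply H; [exact Ha|now destruct (p a)].
Qed.

Definition separated (d : R) (l : list R) : Prop :=
  NoDup l /\ forall x y, In x l -> In y l -> x <> y -> d <= Rabs (x - y).

Lemma separated_incl d l l' : NoDup l' -> incl l' l -> separated d l -> separated d l'.
Proof. intros N I [_ H]; split; auto. Qed.

Lemma separated_filter d p l : separated d l -> separated d (filter p l).
Proof.
  intros Hs; apply separated_incl with l; [apply NoDup_filter, Hs|apply incl_filter|exact Hs].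
Qed.

Lemma separated_shift d c l : separated d l -> separated d (map (fun a => a + c) l).
Proof.
  intros [N H]; split.
  - apply FinFun.Injective_map_NoDup; [intros x y E; lra|exact N].
  - intros x y Hx Hy Hne.
    apply in_map_iff in Hx as [x' [<- Hx]]; apply in_map_iff in Hy as [y' [<- Hy]].
    replace (x' + c - (y' + c)) with (x' - y') by ring.
    apply H; auto; intros ->; auto.
Qed.

Lemma separated_pick d l m : separated d l -> In m l ->
  exists l', separated d l' /\ length l = S (length l') /\
    (forall c, In c l' -> In c l /\ d <= Rabs (c - m)) /\
    forall f : R -> R, sumR f l = f m + sumR f l'.
Proof.
  intros [N H] Hm; destruct (in_split _ _ Hm) as [l1 [l2 Hl]]; subst l.
  assert (Nm : ~ In m (l1 ++ l2)) by (eapply NoDup_remove_2; eauto).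
  assert (Hin : forall b, In b (l1 ++ l2) -> In b (l1 ++ m :: l2)).
  { intros b Hb; apply in_app_or in Hb; apply in_or_app; simpl; tauto. }
  exists (l1 ++ l2); split; [|split; [|split]].
  - split; [eapply NoDup_remove_1; eauto|intros; apply H; auto].
  - rewrite !length_app; simpl; lia.
  - intros c Hc; split; [now apply Hin|apply H; auto; intros ->; contradiction].
  - intros f; rewrite !sumR_app; simpl; ring.
Qed.

Lemma exists_min (l : list R) : l <> [] -> exists m, In m l /\ forall b, In b l -> m <= b.
Proof.
  induction l as [|a l IH]; intros H; [congruence|]; destruct l as [|c l].
  - exists a; split; [now left|]; intros b [->|[]]; lra.
  - destruct IH as [m [Hm Hb]]; [discriminate|]; destruct (Rle_dec m a).
    + exists m; split; [now right|]; intros b [<-|Hb']; auto.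
    + exists a; split; [now left|]; intros b [<-|Hb']; [lra|]; specialize (Hb b Hb'); lra.
Qed.

Lemma exists_max (l : list R) : l <> [] -> exists m, In m l /\ forall b, In b l -> b <= m.
Proof.
  intros H; destruct (exists_min (map Ropp l)) as [m [Hm Hb]].
  - destruct l; [congruence|discriminate].
  - apply in_map_iff in Hm as [m' [<- Hm']]; exists m'; split; [exact Hm'|].
    intros b Hb'; specialize (Hb (- b) (in_map _ _ _ Hb')); lra.
Qed.

Section SeparatedSums.

Variables lam theta delta : R.
Hypothesis lam_gt0 : 0 < lam.

(* In increasing order the elements are at least z, z + delta, z + 2 delta, ...,
   and each step of delta multiplies the summand by 1/b. *)
Lemma sum_exp_separated_le b l z : 1 < b -> exp (- (delta / lam)) = / b ->
  separated delta l -> (forall a, In a l -> z <= a) ->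
  sumR (fun a => exp ((theta - a) / lam)) l <= exp ((theta - z) / lam) * (b / (b - 1)).
Proof.
  intros Hb He; remember (length l) as n eqn:Hn; revert l z Hn.
  induction n as [|n IH]; intros l z Hn Hs Hz.
  - destruct l; [|discriminate]; simpl.
    pose proof (exp_pos ((theta - z) / lam)); pose proof (Rdiv_lt_0_compat b (b - 1)); nra.
  - destruct (exists_min l) as [m [Hm Hmin]]; [intros ->; discriminate|].
    destruct (separated_pick _ _ _ Hs Hm) as [l' [Hs' [Hlen [Hgap ->]]]].
    assert (Hz' : forall a, In a l' -> m + delta <= a).
    { intros a Ha; destruct (Hgap a Ha) as [Hal Hd]; specialize (Hmin a Hal).
      unfold Rabs in Hd; destruct (Rcase_abs (a - m)); lra. }
    specialize (IH l' (m + delta) ltac:(lia) Hs' Hz').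
    assert (Ee : exp ((theta - (m + delta)) / lam) = exp ((theta - m) / lam) * / b).
    { rewrite <- He, <- exp_plus; f_equal; unfold Rdiv; ring. }
    assert (exp ((theta - m) / lam) <= exp ((theta - z) / lam)).
    { apply exp_le_compat, Rdiv_le_compat_r; [exact lam_gt0|]; specialize (Hz m Hm); lra. }
    rewrite Ee in IH.
    replace (exp ((theta - m) / lam) * / b * (b / (b - 1)))
      with (exp ((theta - m) / lam) * (b / (b - 1) - 1)) in IH by (field; lra).
    pose proof (Rdiv_lt_0_compat b (b - 1) ltac:(lra) ltac:(lra)); nra.
Qed.

(* Below y only the largest element of a delta-separated set can exceed
   y - delta, so at most one excess term is nonzero. *)
Lemma sum_excess_separated_le h l y : separated delta l ->
  (forall a, In a l -> a <= y) -> y + h <= theta ->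
  sumR (fun a => Rmax 0 (a + h - theta + delta) / lam) l <= Rmax 0 (y + h - theta + delta) / lam.
Proof.
  set (g := fun a => Rmax 0 (a + h - theta + delta) / lam).
  assert (Hmono : forall u v, u <= v -> g u <= g v).
  { intros u v Huv; apply Rdiv_le_compat_r; [exact lam_gt0|]; unfold Rmax.
    destruct (Rle_dec 0 (u + h - theta + delta)), (Rle_dec 0 (v + h - theta + delta)); lra. }
  assert (Hzero : forall u, u <= y - delta -> y + h <= theta -> g u = 0).
  { intros u Hu Hy; unfold g; rewrite Rmax_left by lra; apply Rdiv_0_l. }
  assert (Hnn : forall u, 0 <= g u).
  { intros u; apply Rdiv_nonneg; [exact lam_gt0|apply Rmax_l]. }
  induction l as [|a l IH]; intros Hs Hy Hyh; simpl; [apply Hnn|].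
  destruct Hs as [N Hs]; inversion N as [|? ? Na Nl]; subst.
  assert (Hsl : separated delta l) by (split; auto; intros; apply Hs; simpl; auto).
  destruct (Rle_dec a (y - delta)).
  - rewrite Hzero, Rplus_0_l by auto; apply IH; auto; intros; apply Hy; simpl; auto.
  - rewrite (sumR_ext _ (fun _ => 0)).
    + rewrite sumR_zero, Rplus_0_r.
      apply Hmono, Hy; simpl; auto.
    + intros c Hc; apply Hzero; auto.
      assert (c <> a) by (intros ->; contradiction).
      specialize (Hs c a (or_intror Hc) (or_introl eq_refl) H).
      assert (c <= y) by (apply Hy; simpl; auto); assert (a <= y) by (apply Hy; simpl; auto).
      unfold Rabs in Hs; destruct (Rcase_abs (c - a)); lra.
Qed.

End SeparatedSums.

Lemma incr_budget_arith b H P : 2 <= b -> 0 <= P -> P < H -> H <= / 2 ->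
  H + (H - P) + H * (exp P / (b - 1)) <= (1 + b / (b - 1)) * H.
Proof.
  intros Hb HP HPH HH.
  assert (E1 : exp P - 1 <= P * exp P).
  { pose proof (exp_ineq1_le (- P)) as E; rewrite exp_Ropp in E.
    pose proof (exp_pos P); apply Rmult_le_compat_l with (r := exp P) in E; [|lra].
    rewrite Rinv_r in E by lra; nra. }
  assert (E2 : exp P <= 2).
  { pose proof exp_half_lt_2; pose proof (exp_le_compat P (/ 2) ltac:(lra)); lra. }
  apply Rmult_le_reg_r with (b - 1); [lra|].
  replace ((H + (H - P) + H * (exp P / (b - 1))) * (b - 1))
    with ((2 * H - P) * (b - 1) + H * exp P) by (field; lra).
  replace ((1 + b / (b - 1)) * H * (b - 1)) with (H * (b - 1) + H * b) by (field; lra).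
  assert (H * exp P <= 1) by nra.
  assert (H * (exp P - 1) <= P) by nra.
  nra.
Qed.

Section LogSplitSums.

Variables lam theta delta b : R.
Hypotheses (lam_gt0 : 0 < lam) (delta_gt0 : 0 < delta) (b_ge2 : 2 <= b).
Hypothesis delta_lam : exp (- (delta / lam)) = / b.

Let incr h a := log_split lam theta delta (a + h) - log_split lam theta delta a.

Lemma sum_log_split_incr_above h l z : 0 <= h -> separated delta l ->
  (forall a, In a l -> theta <= a /\ z <= a) ->
  sumR (incr h) l <= h / lam * (exp ((theta - z) / lam) * (b / (b - 1))).
Proof.
  intros Hh Hs Hl.
  apply Rle_trans with (sumR (fun a => h / lam * exp ((theta - a) / lam)) l).
  - apply sumR_le; intros a Ha; unfold incr; apply log_split_incr_le_tail; auto; try lra; apply Hl, Ha.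
  - rewrite sumR_scale; apply Rmult_le_compat_l.
    + now apply Rdiv_nonneg.
    + apply (sum_exp_separated_le lam theta delta); auto; [lra|intros a Ha; apply Hl, Ha].
Qed.

Lemma sum_log_split_incr_below h l m : 0 <= h -> h <= delta -> separated delta l ->
  In m l -> (forall a, In a l -> a <= m) -> m <= theta ->
  sumR (incr h) l <= h / lam + Rmax 0 (m + h - theta) / lam.
Proof.
  intros Hh Hhd Hs Hm Hmax Hmt.
  destruct (separated_pick _ _ _ Hs Hm) as [l' [Hs' [_ [Hgap ->]]]].
  assert (incr h m <= h / lam) by (unfold incr; now apply log_split_incr_le).
  enough (sumR (incr h) l' <= Rmax 0 (m + h - theta) / lam) by lra.
  apply Rle_trans with (sumR (fun a => Rmax 0 (a + h - theta + delta) / lam) l').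
  - apply sumR_le; intros a _; unfold incr; apply log_split_incr_le_excess; lra.
  - replace (m + h - theta) with ((m - delta) + h - theta + delta) by ring.
    apply sum_excess_separated_le; auto; [|lra].
    intros a Ha; destruct (Hgap a Ha) as [Hal Hd]; specialize (Hmax a Hal).
    unfold Rabs in Hd; destruct (Rcase_abs (a - m)); lra.
Qed.

(* With H = h/lambda and P = (theta - m)/lambda for the highest node m below theta:
   the nodes below theta cost at most H + max(0, H - P), and the lowest node above
   theta lies delta above m, which scales the tail by e^P / b. *)
Lemma sum_log_split_incr_small_split h low high : 0 <= h -> h <= delta -> h <= lam / 2 ->
  separated delta low -> separated delta high ->
  (forall a, In a low -> a <= theta) -> (forall c, In c high -> theta < c) ->
  (forall a c, In a low -> In c high -> delta <= Rabs (c - a)) ->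
  sumR (incr h) low + sumR (incr h) high <= (1 + b / (b - 1)) * (h / lam).
Proof.
  intros Hh Hhd Hhl Slow Shigh Hlow Hhigh Hcross.
  set (H := h / lam).
  assert (HH : 0 <= H) by (unfold H; now apply Rdiv_nonneg).
  assert (HH2 : H <= / 2).
  { unfold H; replace (/ 2) with ((lam / 2) / lam) by (field; lra); now apply Rdiv_le_compat_r. }
  assert (Hbb : 0 < b / (b - 1)) by (apply Rdiv_lt_0_compat; lra).
  assert (Habove : sumR (incr h) high <= H * (b / (b - 1))).
  { pose proof (sum_log_split_incr_above h high theta Hh Shigh) as E.
    rewrite Rminus_diag, Rdiv_0_l, exp_0, Rmult_1_l in E.
    apply E; intros c Hc; specialize (Hhigh c Hc); lra. }
  destruct low as [|a0 low]; [simpl; nra|].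
  destruct (exists_max (a0 :: low)) as [m [Hm Hmax]]; [discriminate|].
  pose proof (sum_log_split_incr_below h (a0 :: low) m Hh Hhd Slow Hm Hmax (Hlow m Hm)) as Hbelow.
  fold H in Hbelow.
  destruct (Rle_dec (m + h) theta).
  - rewrite Rmax_left, Rdiv_0_l in Hbelow by lra; nra.
  - rewrite Rmax_right in Hbelow by lra.
    set (P := (theta - m) / lam).
    assert (HP : 0 <= P).
    { unfold P; apply Rdiv_nonneg; [|specialize (Hlow m Hm)]; lra. }
    assert (HPH : P < H) by (unfold H, P; apply Rmult_lt_compat_r; [apply Rinv_0_lt_compat|]; lra).
    replace ((m + h - theta) / lam) with (H - P) in Hbelow by (unfold H, P, Rdiv; ring).
    assert (Hgap : sumR (incr h) high <= H * (exp P / (b - 1))).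
    { replace (exp P / (b - 1)) with (exp ((theta - (m + delta)) / lam) * (b / (b - 1))).
      - apply sum_log_split_incr_above; auto.
        intros c Hc; specialize (Hhigh c Hc); specialize (Hcross m c Hm Hc); pose proof (Hlow m Hm); split; [lra|].
        unfold Rabs in Hcross; destruct (Rcase_abs (c - m)); lra.
      - replace ((theta - (m + delta)) / lam) with (P + - (delta / lam)) by (unfold P, Rdiv; ring).
        rewrite exp_plus, delta_lam; field; lra. }
    pose proof (incr_budget_arith b H P b_ge2 HP HPH HH2); lra.
Qed.

Lemma sum_log_split_incr_small h l : 0 <= h -> h <= delta -> h <= lam / 2 ->
  separated delta l -> sumR (incr h) l <= (1 + b / (b - 1)) * (h / lam).
Proof.
  intros Hh Hhd Hhl Hs.
  set (p := fun a => if Rle_dec a theta then true else false).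
  rewrite (sumR_filter_split p).
  apply sum_log_split_incr_small_split; auto using separated_filter.
  - intros a Ha; apply filter_In in Ha as [_ Ha]; unfold p in Ha.
    destruct (Rle_dec a theta); [assumption|discriminate].
  - intros c Hc; apply filter_In in Hc as [_ Hc]; unfold p in Hc.
    destruct (Rle_dec c theta); [discriminate|lra].
  - intros a c Ha Hc; apply filter_In in Ha as [Ha Pa]; apply filter_In in Hc as [Hc Pc].
    apply (proj2 Hs); auto; intros ->; rewrite Pa in Pc; discriminate.
Qed.

Lemma sum_log_split_incr_le l : separated delta l ->
  sumR (incr 1) l <= (1 + b / (b - 1)) / lam.
Proof.
  intros Hs.
  set (Bound := fun h => forall l, separated delta l ->
    sumR (incr h) l <= (1 + b / (b - 1)) * (h / lam)).
  assert (Hadd : forall h0 n, Bound h0 -> Bound (INR n * h0)).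
  { intros h0 n Hp; induction n as [|n IH]; intros l0 Hs0.
    - unfold incr; simpl; rewrite (sumR_ext _ (fun _ => 0)), sumR_zero.
      + rewrite Rmult_0_l, Rdiv_0_l; lra.
      + intros a _; rewrite Rmult_0_l, Rplus_0_r; ring.
    - rewrite S_INR, (sumR_ext _ (fun a => incr (INR n * h0) (a + h0) + incr h0 a)).
      + rewrite sumR_plus.
        pose proof (IH _ (separated_shift _ h0 _ Hs0)) as E; rewrite sumR_map in E.
        pose proof (Hp l0 Hs0).
        replace ((1 + b / (b - 1)) * ((INR n + 1) * h0 / lam))
          with ((1 + b / (b - 1)) * (INR n * h0 / lam) + (1 + b / (b - 1)) * (h0 / lam))
          by (unfold Rdiv; ring).
        lra.
      + intros a _; unfold incr; replace (a + (INR n + 1) * h0) with (a + h0 + INR n * h0) by ring.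
        ring. }
  set (mu := Rmin delta (lam / 2)).
  assert (Hmu : 0 < mu) by (unfold mu; apply Rmin_pos; lra).
  destruct (INR_unbounded (/ mu)) as [n Hn].
  assert (Hn0 : 0 < INR n) by (pose proof (Rinv_0_lt_compat mu Hmu); lra).
  assert (Hstep : / INR n <= mu).
  { rewrite <- (Rinv_inv mu); apply Rinv_le_contravar; [apply Rinv_0_lt_compat|]; lra. }
  assert (Hsmall : Bound (/ INR n)).
  { intros l0 Hs0; apply sum_log_split_incr_small; auto.
    - left; now apply Rinv_0_lt_compat.
    - pose proof (Rmin_l delta (lam / 2)) as E; fold mu in E; lra.
    - pose proof (Rmin_r delta (lam / 2)) as E; fold mu in E; lra. }
  pose proof (Hadd _ n Hsmall l Hs) as E; rewrite Rinv_r in E by lra.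
  unfold Rdiv in *; lra.
Qed.

End LogSplitSums.

Definition well_formed (beta : nat) (v : node) : Prop := Forall (fun j => (j < beta)%nat) v.

Lemma well_formed_child beta v j : well_formed beta v -> (j < beta)%nat ->
  well_formed beta (child v j).
Proof. intros Hv Hj; apply Forall_app; split; [exact Hv|now repeat constructor]. Qed.

Lemma valid_output_well_formed beta I : valid_output beta I ->
  forall v, In v I -> well_formed beta v.
Proof.
  intros [_ HI] v; induction v as [|k v IH] using rev_ind; intros Hin; [constructor|].
  destruct (HI _ Hin) as [E|[u [j [Hu [Hj E]]]]]; [now destruct v|].
  apply app_inj_tail in E as [-> ->]; apply well_formed_child; auto.
Qed.

Lemma valid_output_prefix_closed beta I : valid_output beta I ->
  forall s u, In (u ++ s) I -> In u I.
Proof.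
  intros [_ HI] s; induction s as [|k s IH] using rev_ind; intros u Hin.
  - now rewrite app_nil_r in Hin.
  - rewrite app_assoc in Hin; destruct (HI _ Hin) as [E|[u' [j [Hu [_ E]]]]].
    + now destruct (u ++ s).
    + apply app_inj_tail in E as [<- _]; now apply IH.
Qed.

Lemma child_inj v u i j : child v i = child u j -> v = u /\ i = j.
Proof. apply app_inj_tail. Qed.

Lemma in_leaves beta I w : In w (leaves beta I) ->
  (I = [] /\ w = []) \/
  (exists u j, In u I /\ (j < beta)%nat /\ w = child u j /\ ~ In w I).
Proof.
  unfold leaves; destruct I as [|n I'].
  - intros [<-|[]]; now left.
  - intros H; right; apply filter_In in H as [H1 H2].
    apply in_flat_map in H1 as [u [Hu Hw]]; apply in_map_iff in Hw as [j [<- Hj]].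
    apply in_seq in Hj; exists u, j; repeat split; auto; [lia|].
    unfold in_nodes in H2; destruct in_dec; [discriminate|assumption].
Qed.

Lemma NoDup_leaves beta I : NoDup I -> NoDup (leaves beta I).
Proof.
  intros N; unfold leaves; destruct I as [|v0 I0]; [repeat constructor; simpl; tauto|].
  apply NoDup_filter; induction N as [|v l Hv N IH]; simpl; [constructor|].
  apply NoDup_app; auto.
  - apply FinFun.Injective_map_NoDup; [intros i j E; now apply child_inj in E|apply seq_NoDup].
  - intros a Ha Hb; apply in_map_iff in Ha as [i [<- _]].
    apply in_flat_map in Hb as [u [Hu Hb]]; apply in_map_iff in Hb as [j [E _]].
    apply child_inj in E as [-> _]; contradiction.
Qed.

Lemma length_filter_le_impl {A} (f g : A -> bool) l : (forall y, f y = true -> g y = true) ->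
  (length (filter f l) <= length (filter g l))%nat.
Proof.
  intros H; induction l as [|a l IH]; simpl; [lia|].
  destruct (f a) eqn:E; [rewrite (H a E); simpl; lia|destruct (g a); simpl; lia].
Qed.

Lemma count_in_insert {Omega} (dom : node -> Omega -> bool) D D' x v :
  Permutation D' (x :: D) ->
  count_in dom D' v = (count_in dom D v + (if dom v x then 1 else 0))%nat.
Proof.
  intros P; unfold count_in.
  replace (length (filter (dom v) D')) with (length (filter (dom v) (x :: D))).
  - simpl; destruct (dom v x); simpl; lia.
  - clear -P; induction P; simpl; auto; [destruct (dom v x0)|destruct (dom v x0), (dom v y)|];
      simpl; auto; lia.
Qed.

Section SplittingPath.

Variables (Omega : Type) (beta : nat) (dom : node -> Omega -> bool).
Hypothesis Hdom : splitting_scheme Omega beta dom.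

Lemma dom_prefix s u y : well_formed beta (u ++ s) -> dom (u ++ s) y = true -> dom u y = true.
Proof.
  destruct Hdom as [_ [Hsub _]]; revert u.
  induction s as [|k s IH] using rev_ind; intros u Hg Hd; [now rewrite app_nil_r in Hd|].
  rewrite app_assoc in Hg, Hd; apply Forall_app in Hg as [Hg Hk]; inversion Hk; subst.
  apply IH; [exact Hg|]; eapply Hsub; eauto.
Qed.

Lemma dom_same_depth v w x : well_formed beta v -> well_formed beta w ->
  length v = length w -> dom v x = true -> dom w x = true -> v = w.
Proof.
  revert w; induction v as [|j v IH] using rev_ind; intros w Gv Gw L Dv Dw.
  - now destruct w.
  - destruct w as [|c w _] using rev_ind; [rewrite length_app in L; simpl in L; lia|].
    rewrite !length_app in L; simpl in L.
    pose proof (dom_prefix [j] v x Gv Dv) as Dv'; pose proof (dom_prefix [c] w x Gw Dw) as Dw'.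
    apply Forall_app in Gv as [Gv Gj]; apply Forall_app in Gw as [Gw Gc].
    inversion Gj; inversion Gc; subst.
    assert (v = w) as -> by (apply IH; auto; lia).
    destruct Hdom as [_ [_ Hpart]]; destruct (Hpart w x Dw') as [j0 [_ [_ U]]].
    now rewrite (U j), (U c).
Qed.

Lemma dom_deeper v w x : well_formed beta v -> well_formed beta w ->
  (length v <= length w)%nat -> dom v x = true -> dom w x = true ->
  w = v ++ skipn (length v) w.
Proof.
  intros Gv Gw L Dv Dw; pose proof (firstn_skipn (length v) w) as E.
  rewrite <- E in Gw, Dw.
  enough (firstn (length v) w = v) as Ev by (rewrite Ev in E; auto).
  apply dom_same_depth with x; auto.
  - now apply Forall_app in Gw.
  - rewrite length_firstn; lia.
  - now apply dom_prefix in Dw.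
Qed.

Lemma leaves_dom_unique I x : valid_output beta I ->
  forall w1 w2, In w1 (leaves beta I) -> In w2 (leaves beta I) ->
  dom w1 x = true -> dom w2 x = true -> w1 = w2.
Proof.
  intros HV.
  enough (key : forall w1 w2, In w1 (leaves beta I) -> In w2 (leaves beta I) ->
    dom w1 x = true -> dom w2 x = true -> (length w1 <= length w2)%nat -> w1 = w2).
  { intros w1 w2 H1 H2 D1 D2; destruct (Nat.le_ge_cases (length w1) (length w2));
      [now apply key|symmetry; now apply key]. }
  intros w1 w2 H1 H2 D1 D2 L.
  destruct (in_leaves _ _ _ H1) as [[-> ->]|[u1 [j1 [Hu1 [Hj1 [-> N1]]]]]];
  destruct (in_leaves _ _ _ H2) as [[E2 ->]|[u2 [j2 [Hu2 [Hj2 [-> N2]]]]]];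
    subst; try contradiction; auto.
  pose proof (valid_output_well_formed _ _ HV) as Gwf.
  assert (G1 := well_formed_child _ _ _ (Gwf _ Hu1) Hj1).
  assert (G2 := well_formed_child _ _ _ (Gwf _ Hu2) Hj2).
  destruct (Nat.eq_dec (length (child u1 j1)) (length (child u2 j2))) as [Le|Lne].
  - now apply dom_same_depth with x.
  - exfalso; unfold child in *; rewrite !length_app in L, Lne; simpl in L, Lne.
    assert (Du2 : dom u2 x = true) by (eapply (dom_prefix [j2]); eauto).
    assert (E := dom_deeper (u1 ++ [j1]) u2 x G1 (Gwf _ Hu2)
                   ltac:(rewrite length_app; simpl; lia) D1 Du2).
    rewrite E in Hu2; apply (valid_output_prefix_closed _ _ HV) in Hu2; contradiction.
Qed.

End SplittingPath.

Lemma prodR_pos {A} (F : A -> R) l : (forall v, 0 < F v) -> 0 < prodR (map F l).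
Proof. intros H; induction l; simpl; [lra|]; now apply Rmult_lt_0_compat. Qed.

Lemma ln_prodR_div {A} (F G : A -> R) l : (forall v, 0 < F v) -> (forall v, 0 < G v) ->
  ln (prodR (map F l) / prodR (map G l)) = sumR (fun v => ln (F v / G v)) l.
Proof.
  intros HF HG; induction l as [|a l IH]; simpl; [rewrite Rdiv_1_l, Rinv_1; apply ln_1|].
  pose proof (prodR_pos F l HF); pose proof (prodR_pos G l HG); pose proof (HF a); pose proof (HG a).
  replace (F a * prodR (map F l) / (G a * prodR (map G l)))
    with (F a / G a * (prodR (map F l) / prodR (map G l))) by (field; lra).
  rewrite ln_mult, IH; auto; now apply Rdiv_lt_0_compat.
Qed.

Lemma at_most_one {A} (l : list A) : NoDup l -> (forall a b, In a l -> In b l -> a = b) ->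
  l = [] \/ exists a, l = [a].
Proof.
  intros N H; destruct l as [|a [|b l]]; eauto.
  exfalso; inversion N as [|? ? Na]; subst; apply Na.
  rewrite (H a b) by (simpl; auto); simpl; auto.
Qed.

Definition node_split_prob {Omega} (dom : node -> Omega -> bool) (D : list Omega)
  (lam theta delta : R) (v : node) : R :=
  split_prob lam theta (biased_count dom D theta delta v).

Definition unbiased_count {Omega} (dom : node -> Omega -> bool) (D : list Omega)
  (delta : R) (v : node) : R :=
  INR (count_in dom D v) - INR (depth v) * delta.

Section PrivTreeInsertion.

Variables (Omega : Type) (beta : nat) (dom : node -> Omega -> bool).
Hypothesis Hdom : splitting_scheme Omega beta dom.
Variables lam theta delta : R.
Hypothesis lam_gt0 : 0 < lam.

Local Notation f D := (node_split_prob dom D lam theta delta).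

Lemma split_prob_bounds D v : 0 < f D v < 1.
Proof. now apply lap_survival_bounds. Qed.

Lemma ln_privtree_prob_div D D' I :
  ln (privtree_prob beta dom D lam theta delta I / privtree_prob beta dom D' lam theta delta I) =
  sumR (fun v => ln (f D v / f D' v)) I +
  sumR (fun v => ln ((1 - f D v) / (1 - f D' v))) (leaves beta I).
Proof.
  assert (Hprod : forall D0, privtree_prob beta dom D0 lam theta delta I =
    prodR (map (f D0) I) * prodR (map (fun v => 1 - f D0 v) (leaves beta I))) by reflexivity.
  rewrite !Hprod.
  assert (Hf : forall D0 v, 0 < f D0 v) by (intros; apply split_prob_bounds).
  assert (Hg : forall D0 v, 0 < 1 - f D0 v) by (intros D0 v; pose proof (split_prob_bounds D0 v); lra).
  pose proof (prodR_pos (f D) I (Hf D)); pose proof (prodR_pos (f D') I (Hf D')).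
  pose proof (prodR_pos _ (leaves beta I) (Hg D)); pose proof (prodR_pos _ (leaves beta I) (Hg D')).
  rewrite <- (ln_prodR_div (f D) (f D')), <- (ln_prodR_div (fun v => 1 - f D v) (fun v => 1 - f D' v))
    by auto.
  rewrite <- ln_mult by (apply Rdiv_lt_0_compat; auto); f_equal; field; lra.
Qed.

Variables (D D' : list Omega) (x : Omega).
Hypothesis Hins : Permutation D' (x :: D).

Local Notation unbiased := (unbiased_count dom D delta).
Local Notation ind v := (if dom v x then 1 else 0).

Lemma split_prob_before v : f D v = lap_survival lam (theta - Rmax (theta - delta) (unbiased v)).
Proof. reflexivity. Qed.

Lemma split_prob_after v :
  f D' v = lap_survival lam (theta - Rmax (theta - delta) (unbiased v + ind v)).
Proof.
  unfold node_split_prob, split_prob, biased_count; rewrite (count_in_insert dom D D' x v Hins), plus_INR.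
  unfold unbiased_count; do 3 f_equal; destruct (dom v x); simpl; ring.
Qed.

Lemma split_prob_insert_le v : f D v <= f D' v.
Proof.
  rewrite split_prob_before, split_prob_after; apply lap_survival_antimono; [exact lam_gt0|].
  enough (Rmax (theta - delta) (unbiased v) <= Rmax (theta - delta) (unbiased v + ind v)) by lra.
  apply Rle_max_compat_l; destruct (dom v x); lra.
Qed.

Lemma split_prob_insert_eq v : dom v x = false -> f D' v = f D v.
Proof. intros E; rewrite split_prob_after, split_prob_before; rewrite E, Rplus_0_r; reflexivity. Qed.

Lemma ln_split_prob_insert_le v : ln ((1 - f D v) / (1 - f D' v)) <= 1 / lam.
Proof.
  pose proof (split_prob_bounds D v); pose proof (split_prob_bounds D' v).
  apply ln_div_le; try lra.
  rewrite split_prob_before, split_prob_after, !one_sub_lap_survival.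
  set (s := - (theta - Rmax (theta - delta) (unbiased v))).
  set (t := - (theta - Rmax (theta - delta) (unbiased v + ind v))).
  assert (Hst : s <= t /\ t - s <= 1).
  { unfold s, t, Rmax; destruct (dom v x), (Rle_dec (theta - delta) (unbiased v)),
      (Rle_dec (theta - delta) (unbiased v + 1)), (Rle_dec (theta - delta) (unbiased v + 0)); lra. }
  eapply Rle_trans; [apply lap_survival_le_shift; [exact lam_gt0|apply Hst]|].
  apply Rmult_le_compat_l; [left; apply lap_survival_bounds, lam_gt0|].
  apply exp_le_compat, Rdiv_le_compat_r; [exact lam_gt0|apply Hst].
Qed.

(* Unbiased counts drop by at least delta from a node to any descendant. *)
Lemma path_unbiased_separated I : 0 < delta -> valid_output beta I ->
  separated delta (map unbiased (filter (fun v => dom v x) I)).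
Proof.
  intros Hd HI; set (J := filter (fun v => dom v x) I).
  assert (HJ : forall v, In v J -> well_formed beta v /\ dom v x = true).
  { intros v Hv; apply filter_In in Hv as [Iv Dv]; split; auto.
    now apply (valid_output_well_formed beta I). }
  assert (Hgap : forall v w, In v J -> In w J -> (length v < length w)%nat ->
    unbiased w + delta <= unbiased v).
  { intros v w Hv Hw L; destruct (HJ v Hv) as [Gv Dv]; destruct (HJ w Hw) as [Gw Dw].
    pose proof (dom_deeper _ _ _ Hdom v w x Gv Gw ltac:(lia) Dv Dw) as Ew.
    assert (Cle : (count_in dom D w <= count_in dom D v)%nat).
    { apply length_filter_le_impl; intros y Hy; rewrite Ew in Gw, Hy.
      now apply (dom_prefix _ _ _ Hdom (skipn (length v) w)). }
    apply le_INR in Cle.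
    assert (INR (length v) + 1 <= INR (length w)) by (rewrite <- S_INR; apply le_INR; lia).
    unfold unbiased_count, depth; nra. }
  assert (Hne : forall v w, In v J -> In w J -> v <> w -> delta <= Rabs (unbiased v - unbiased w)).
  { intros v w Hv Hw Nvw; destruct (Nat.lt_trichotomy (length v) (length w)) as [L|[L|L]].
    - specialize (Hgap v w Hv Hw L); rewrite Rabs_right; lra.
    - exfalso; apply Nvw; destruct (HJ v Hv), (HJ w Hw); now apply (dom_same_depth _ _ _ Hdom v w x).
    - specialize (Hgap w v Hw Hv L); rewrite Rabs_left1; lra. }
  split.
  - apply FinFun.Injective_map_NoDup_in; [|apply NoDup_filter, HI].
    intros v w Hv Hw E; destruct (list_eq_dec Nat.eq_dec v w) as [|n]; auto.
    specialize (Hne v w Hv Hw n); rewrite E, Rminus_diag, Rabs_R0 in Hne; lra.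
  - intros y z Hy Hz Nyz; apply in_map_iff in Hy as [v [<- Hv]]; apply in_map_iff in Hz as [w [<- Hw]].
    apply Hne; auto; intros ->; auto.
Qed.

Lemma privtree_insert_le b I : 0 < delta -> 2 <= b -> exp (- (delta / lam)) = / b ->
  valid_output beta I ->
  ln (privtree_prob beta dom D' lam theta delta I / privtree_prob beta dom D lam theta delta I)
  <= (1 + b / (b - 1)) / lam.
Proof.
  intros Hd Hb He HI; rewrite ln_privtree_prob_div.
  assert (Hleaves : sumR (fun v => ln ((1 - f D' v) / (1 - f D v))) (leaves beta I) <= 0).
  { apply sumR_nonpos; intros v _; pose proof (split_prob_insert_le v).
    pose proof (split_prob_bounds D' v); apply ln_div_nonpos; lra. }
  enough (sumR (fun v => ln (f D' v / f D v)) I <= (1 + b / (b - 1)) / lam) by lra.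
  rewrite (sumR_filter (fun v => dom v x)).
  - set (incr := fun a => log_split lam theta delta (a + 1) - log_split lam theta delta a).
    rewrite (sumR_ext _ (fun v => incr (unbiased v))), <- (sumR_map incr).
    + apply (sum_log_split_incr_le lam theta delta b); auto.
      now apply path_unbiased_separated.
    + intros v Hv; apply filter_In in Hv as [_ Dv].
      pose proof (split_prob_bounds D v); pose proof (split_prob_bounds D' v).
      rewrite ln_div_eq by lra; unfold incr, log_split, split_prob.
      rewrite <- split_prob_before, split_prob_after, Dv; reflexivity.
  - intros v _ Dv; rewrite split_prob_insert_eq by exact Dv.
    pose proof (split_prob_bounds D v); rewrite Rdiv_diag by lra; apply ln_1.
Qed.

(* Only the unique leaf containing x can make the removal of x costly. *)
Lemma privtree_remove_le I : valid_output beta I ->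
  ln (privtree_prob beta dom D lam theta delta I / privtree_prob beta dom D' lam theta delta I)
  <= 1 / lam.
Proof.
  intros HI; rewrite ln_privtree_prob_div.
  assert (Hinternal : sumR (fun v => ln (f D v / f D' v)) I <= 0).
  { apply sumR_nonpos; intros v _; pose proof (split_prob_insert_le v).
    pose proof (split_prob_bounds D v); apply ln_div_nonpos; lra. }
  enough (sumR (fun v => ln ((1 - f D v) / (1 - f D' v))) (leaves beta I) <= 1 / lam) by lra.
  rewrite (sumR_filter (fun v => dom v x)).
  - destruct (at_most_one (filter (fun v => dom v x) (leaves beta I))) as [->|[w ->]].
    + apply NoDup_filter, NoDup_leaves, HI.
    + intros u w Hu Hw; apply filter_In in Hu as [Hu Du]; apply filter_In in Hw as [Hw Dw].
      now apply (leaves_dom_unique _ _ _ Hdom I x).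
    + simpl; left; apply Rdiv_lt_0_compat; lra.
    + simpl; rewrite Rplus_0_r; apply ln_split_prob_insert_le.
  - intros v _ Dv; rewrite split_prob_insert_eq by exact Dv.
    pose proof (split_prob_bounds D v); rewrite Rdiv_diag by lra; apply ln_1.
Qed.

End PrivTreeInsertion.

Theorem corollary1 (Omega : Type) (beta : nat) (dom : node -> Omega -> bool)
  (Hbeta : (2 <= beta)%nat) (Hdom : splitting_scheme Omega beta dom)
  (eps theta lam delta : R) (Heps : 0 < eps)
  (Hlam : (2 * INR beta - 1) / (INR beta - 1) * / eps <= lam)
  (Hdelta : delta = lam * ln (INR beta)) :
  privtree_DP beta dom lam theta delta eps.
Proof.
  set (b := INR beta) in *.
  assert (Hb : 2 <= b) by (unfold b; replace 2 with (INR 2) by (simpl; ring); now apply le_INR).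
  replace ((2 * b - 1) / (b - 1)) with (1 + b / (b - 1)) in Hlam by (field; lra).
  assert (HK : 1 <= 1 + b / (b - 1)) by (pose proof (Rdiv_lt_0_compat b (b - 1)); lra).
  pose proof (Rinv_0_lt_compat eps Heps).
  assert (Hl : 0 < lam) by nra.
  assert (Hinsert : (1 + b / (b - 1)) / lam <= eps).
  { apply Rmult_le_reg_r with (lam / eps); [now apply Rdiv_lt_0_compat|].
    replace ((1 + b / (b - 1)) / lam * (lam / eps)) with ((1 + b / (b - 1)) * / eps) by (field; lra).
    replace (eps * (lam / eps)) with lam by (field; lra); exact Hlam. }
  assert (Hremove : 1 / lam <= eps).
  { eapply Rle_trans; [|exact Hinsert]; now apply Rdiv_le_compat_r. }
  assert (Hlnb : 0 < ln b) by (rewrite <- ln_1; apply ln_increasing; lra).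
  assert (Hd : 0 < delta) by (rewrite Hdelta; nra).
  assert (He : exp (- (delta / lam)) = / b).
  { rewrite Hdelta, exp_Ropp; replace (lam * ln b / lam) with (ln b) by (field; lra).
    rewrite exp_ln; lra. }
  intros D1 D2 [[x Hins]|[x Hins]] I HI.
  - eapply Rle_trans; [apply (privtree_remove_le _ _ _ Hdom lam theta delta Hl D1 D2 x Hins I HI)|lra].
  - eapply Rle_trans; [apply (privtree_insert_le _ _ _ Hdom lam theta delta Hl D2 D1 x Hins b I)|]; auto.
Qed.
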